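(* Let $x_0<\dots<x_n$ and $\hat x_0<\dots<\hat x_n$ be real numbers with $\hat x_0=x_0$, $\hat x_n=x_n$, such that $\max_{k}\sum_{j\neq k}|r_{jk}(\mathbf{x},\hat{\mathbf{x}})|<0.01$ and $\max_k|\hat x_k-x_k|\le0.1\min_{j\neq k}|x_j-x_k|$. Let $f:[x_0,x_n]\to\mathbb{R}$ be Lipschitz with constant $L$, and $y_k=f(\hat x_k)$. Then for every $t\in[x_0,x_n]$, \[ |E(t;\mathbf{y},\mathbf{z})|\le L\,\rho(\hat{\mathbf{x}})\,\|\mathbf{z}\|_1+\Lambda(\hat{\mathbf{x}})\,\|\mathbf{z}\|_\infty\,\|f-P_{\mathbf{y}}\|_\infty . \]
   Context: $r_{jk}(\mathbf{x},\hat{\mathbf{x}}):=\frac{\hat x_k-\hat x_j}{x_k-x_j}-1$; $\lambda_k(\mathbf{x}):=1/\prod_{j\neq k}(x_k-x_j)$; $z_k=(\lambda_k(\mathbf{x})-\lambda_k(\hat{\mathbf{x}}))/\lambda_k(\hat{\mathbf{x}})$. $\ell_k$ is the $k$-th Lagrange polynomial for the nodes $\hat{\mathbf{x}}$; $\rho(\hat{\mathbf{x}}):=\max_{0\le k\le n}\max_{x_0\le t\le x_n}|\ell_k(t)(t-\hat x_k)|$; $\Lambda(\hat{\mathbf{x}}):=\max_{t\in[x_0,x_n]}\sum_k|\ell_k(t)|$. For $\mathbf{v}\in\mathbb{R}^{n+1}$, $P_{\mathbf{v}}$ is the polynomial of degree $\le n$ with $P_{\mathbf{v}}(\hat x_k)=v_k$;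 $E(t;\mathbf{y},\mathbf{z}):=P_{\mathbf{y}\mathbf{z}}(t)-P_{\mathbf{y}}(t)P_{\mathbf{z}}(t)$ with $(\mathbf{yz})_k=y_kz_k$. $\|\cdot\|_\infty$ for functions is the sup norm on $[x_0,x_n]$. *)

From HB Require Import structures.
From mathcomp Require Import all_boot all_order all_algebra.
From mathcomp Require Import boolp classical_sets reals.
Set Implicit Arguments. Unset Strict Implicit. Unset Printing Implicit Defensive.
Import Order.TTheory GRing.Theory Num.Theory.
Local Open Scope ring_scope.
Local Open Scope classical_set_scope.

Section Defs.
Variables (R : realType) (n : nat).
Implicit Types (x xh v : 'I_n.+1 -> R).

Definition rjk x xh (j k : 'I_n.+1) : R := (xh k - xh j) / (x k - x j) - 1.

Definition lam x (k : 'I_n.+1) : R := 1 / \prod_(j < n.+1 | j != k) (x k - x j).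

Definition zvec x xh (k : 'I_n.+1) : R := (lam x k - lam xh k) / lam xh k.

Definition ell xh (k : 'I_n.+1) (t : R) : R :=
  \prod_(j < n.+1 | j != k) ((t - xh j) / (xh k - xh j)).

Definition Pv xh v (t : R) : R := \sum_(k < n.+1) v k * ell xh k t.

Definition Eerr xh (y z : 'I_n.+1 -> R) (t : R) : R :=
  Pv xh (fun k => y k * z k) t - Pv xh y t * Pv xh z t.

Definition Icc (a b : R) : set R := [set t | a <= t <= b].

Definition rho x xh : R :=
  sup [set u | exists k : 'I_n.+1, exists2 t, Icc (x ord0) (x ord_max) t &
                 u = `|ell xh k t * (t - xh k)|].

Definition Lebesgue x xh : R :=
  sup [set u | exists2 t, Icc (x ord0) (x ord_max) t &
                 u = \sum_(k < n.+1) `|ell xh k t|].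

Definition supnorm x (g : R -> R) : R :=
  sup [set u | exists2 t, Icc (x ord0) (x ord_max) t & u = `|g t|].

Definition norm1 (v : 'I_n.+1 -> R) : R := \sum_(k < n.+1) `|v k|.
Definition norminf (v : 'I_n.+1 -> R) : R := \big[Num.max/0]_(k < n.+1) `|v k|.

End Defs.

(* Writing P_{yz} - P_y P_z with the Lagrange basis gives, for any constant c,
   E(t) = sum_k z_k l_k(t) (y_k - c) + (c - P_y(t)) P_z(t).  Taking c = f(t),
   the Lipschitz bound |y_k - f(t)| <= L |t - xh_k| controls each term of the
   sum by L rho |z_k|, while |P_z(t)| <= ||z||_inf sum_k |l_k(t)| <= ||z||_inf
   Lambda. *)
From HB Require Import structures.
From mathcomp Require Import all_boot all_order all_algebra.
From mathcomp Require Import boolp classical_sets reals.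
From mathcomp Require Import ring lra.
Set Implicit Arguments. Unset Strict Implicit. Unset Printing Implicit Defensive.
Import Order.TTheory GRing.Theory Num.Theory.
Local Open Scope ring_scope.

Lemma Eerr_decomp (R : realType) (n : nat) (xh y z : 'I_n.+1 -> R) (c t : R) :
  Eerr xh y z t =
  \sum_(k < n.+1) z k * ell xh k t * (y k - c) + (c - Pv xh y t) * Pv xh z t.
Proof.
have -> : \sum_(k < n.+1) z k * ell xh k t * (y k - c) =
          Pv xh (fun k => y k * z k) t - c * Pv xh z t.
  by rewrite /Pv mulr_sumr -sumrB; apply: eq_bigr => k _; ring.
rewrite /Eerr; ring.
Qed.

Lemma norminf_ge (R : realType) (n : nat) (v : 'I_n.+1 -> R) k :
  `|v k| <= norminf v.
Proof. exact: (le_bigmax 0 (fun k => `|v k|) k). Qed.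

Lemma norminf_ge0 (R : realType) (n : nat) (v : 'I_n.+1 -> R) : 0 <= norminf v.
Proof. by apply: le_trans (norminf_ge v ord0). Qed.

Lemma normr_Pv_le (R : realType) (n : nat) (xh v : 'I_n.+1 -> R) t :
  `|Pv xh v t| <= norminf v * \sum_(k < n.+1) `|ell xh k t|.
Proof.
rewrite mulr_sumr; apply: le_trans (ler_norm_sum _ _ _) _.
by apply: ler_sum => k _; rewrite normrM ler_wpM2r ?norminf_ge.
Qed.

Section Interpolation.
Variables (R : realType) (n : nat) (x xh : 'I_n.+1 -> R).
Hypothesis hxh : forall i j : 'I_n.+1, (i < j)%N -> xh i < xh j.
Hypothesis h0 : xh ord0 = x ord0.
Hypothesis hn : xh ord_max = x ord_max.

Local Notation I := (Icc (x ord0) (x ord_max)).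

Lemma xh_le_xh (i j : 'I_n.+1) : (i <= j)%N -> xh i <= xh j.
Proof.
rewrite leq_eqVlt => /orP[/eqP/val_inj -> // | ij].
exact/ltW/hxh.
Qed.

Lemma xh_in_Icc k : I (xh k).
Proof. by rewrite /Icc /= -h0 -hn !xh_le_xh // -ltnS. Qed.

Lemma Icc_dist s u : I s -> I u -> `|s - u| <= x ord_max - x ord0.
Proof. by rewrite /Icc /= => /andP[? ?] /andP[? ?]; rewrite ler_norml; lra. Qed.

Lemma Icc_width_ge0 : 0 <= x ord_max - x ord0.
Proof. exact: le_trans (Icc_dist (xh_in_Icc ord0) (xh_in_Icc ord0)). Qed.

Definition ell_bound k : R :=
  \prod_(j < n.+1 | j != k) ((x ord_max - x ord0) / `|xh k - xh j|).

Lemma ell_bound_ge0 k : 0 <= ell_bound k.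
Proof. by apply: prodr_ge0 => j _; rewrite divr_ge0 ?Icc_width_ge0. Qed.

Lemma normr_ell_le k t : I t -> `|ell xh k t| <= ell_bound k.
Proof.
move=> It; rewrite /ell normr_prod; apply: ler_prod => j _.
rewrite normr_ge0 normrM normfV ler_wpM2r ?invr_ge0 //.
exact: Icc_dist (xh_in_Icc j).
Qed.

Lemma rho_ge k t : I t -> `|ell xh k t * (t - xh k)| <= rho x xh.
Proof.
move=> It; apply: ub_le_sup; last by exists k, t.
exists (\sum_(i < n.+1) ell_bound i * (x ord_max - x ord0)) => _ [i [s Is ->]].
rewrite (bigD1 i) //= -[X in X <= _]addr0 normrM lerD ?ler_pM //.
- exact: normr_ell_le.
- exact: Icc_dist (xh_in_Icc i).
- by apply: sumr_ge0 => j _; rewrite mulr_ge0 ?ell_bound_ge0 ?Icc_width_ge0.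
Qed.

Lemma Lebesgue_ge t : I t -> \sum_(k < n.+1) `|ell xh k t| <= Lebesgue x xh.
Proof.
move=> It; apply: ub_le_sup; last by exists t.
exists (\sum_(k < n.+1) ell_bound k) => _ [s Is ->].
by apply: ler_sum => k _; apply: normr_ell_le.
Qed.

Lemma supnorm_ge (g : R -> R) t :
  (exists M, forall s, I s -> `|g s| <= M) -> I t -> `|g t| <= supnorm x g.
Proof.
move=> [M gM] It; apply: ub_le_sup; last by exists t.
by exists M => _ [s Is ->]; apply: gM.
Qed.

Lemma Pv_bounded v : exists M, forall s, I s -> `|Pv xh v s| <= M.
Proof.
exists (norminf v * \sum_(k < n.+1) ell_bound k) => s Is.
apply: le_trans (normr_Pv_le _ _ _) _.
by rewrite ler_wpM2l ?norminf_ge0 //; apply: ler_sum => k _; apply: normr_ell_le.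
Qed.

Variables (f : R -> R) (L : R).
Hypothesis hlip : forall s t, I s -> I t -> `|f s - f t| <= L * `|s - t|.

Lemma lipschitz_bounded : exists M, forall s, I s -> `|f s| <= M.
Proof.
have Ia := xh_in_Icc ord0; rewrite h0 in Ia.
exists (`|f (x ord0)| + `|L| * (x ord_max - x ord0)) => s Is.
have -> : f s = f (x ord0) + (f s - f (x ord0)) by ring.
rewrite (le_trans (ler_normD _ _)) // lerD2l (le_trans (hlip Is Ia)) //.
rewrite (le_trans (ler_norm _)) // normrM normr_id ler_wpM2l //.
exact: Icc_dist.
Qed.

Lemma Icc_eq_of_lipschitz_lt0 s u : L < 0 -> I s -> I u -> s = u.
Proof.
move=> L0 Is Iu; apply/eqP; rewrite -subr_eq0 -normr_le0.
have := hlip Is Iu; have := normr_ge0 (f s - f u); have := normr_ge0 (s - u).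
nra.
Qed.

Lemma normr_ell_lipschitz_le k t :
  I t -> `|ell xh k t * (f (xh k) - f t)| <= L * rho x xh.
Proof.
move=> It; have [L0 | L0] := leP 0 L.
  have lip := hlip (xh_in_Icc k) It.
  rewrite normrM (le_trans (ler_wpM2l (normr_ge0 _) lip)) // mulrCA ler_wpM2l //.
  by rewrite (distrC (xh k)) -normrM rho_ge.
(* For L < 0 the interval is a single point, so both sides vanish. *)
have xt k' s : I s -> xh k' = s by apply: Icc_eq_of_lipschitz_lt0 L0 (xh_in_Icc k').
have -> : rho x xh = 0.
  rewrite /rho [X in sup X](_ : _ = [set 0]%classic) ?sup1 //.
  apply/seteqP; split => u /=.
    by move=> [i [s Is ->]]; rewrite (xt i s Is) subrr mulr0 normr0.
  by move=> ->; exists k, t => //; rewrite (xt k t It) subrr mulr0 normr0.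
by rewrite (xt k t It) subrr mulr0 mulr0 normr0.
Qed.

End Interpolation.

Theorem lemma5 (R : realType) (n : nat) (x xh : 'I_n.+1 -> R)
  (f : R -> R) (L : R)
  (hx : forall i j : 'I_n.+1, (i < j)%N -> x i < x j)
  (hxh : forall i j : 'I_n.+1, (i < j)%N -> xh i < xh j)
  (h0 : xh ord0 = x ord0) (hn : xh ord_max = x ord_max)
  (hr : forall k : 'I_n.+1,
          \sum_(j < n.+1 | j != k) `|rjk x xh j k| < 1 / 100)
  (hpert : forall k i j : 'I_n.+1, i != j ->
          `|xh k - x k| <= 1 / 10 * `|x i - x j|)
  (hlip : forall s t, Icc (x ord0) (x ord_max) s -> Icc (x ord0) (x ord_max) t ->
          `|f s - f t| <= L * `|s - t|) :
  let y := fun k : 'I_n.+1 => f (xh k) in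
  let z := zvec x xh in
  forall t, Icc (x ord0) (x ord_max) t ->
    `|Eerr xh y z t| <=
      L * rho x xh * norm1 z + Lebesgue x xh * norminf z * supnorm x (fun s => f s - Pv xh y s).
Proof.
move=> y z t It; rewrite (Eerr_decomp _ _ _ (f t)).
apply: le_trans (ler_normD _ _) _; apply: lerD.
  rewrite /norm1 mulr_sumr; apply: le_trans (ler_norm_sum _ _ _) _.
  apply: ler_sum => k _; rewrite -mulrA normrM mulrC ler_wpM2r //.
  exact: normr_ell_lipschitz_le.
rewrite normrM mulrC; apply: ler_pM => //.
  rewrite (le_trans (normr_Pv_le _ _ _)) // [X in _ <= X]mulrC ler_wpM2l ?norminf_ge0 //.
  exact: Lebesgue_ge.
apply: (supnorm_ge (g := fun s => f s - Pv xh y s)) => //.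
have [Mf hMf] := lipschitz_bounded hxh h0 hn hlip.
have [MP hMP] := Pv_bounded hxh h0 hn y.
by exists (Mf + MP) => s Is; rewrite (le_trans (ler_normB _ _)) ?lerD ?hMf ?hMP.
Qed.
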